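(* Let $\mathbf X=\{X_n\}$, $\mathbf Z=\{Z_n\}$ be general sources with given couplings $P_{Z_n|X_n}$, and let $\mathbf W=\{W_{Y_n|X_n}\}$ be a general channel. Suppose that for every $\gamma\in\mathbb R$, $$\lim_{n\to\infty}\mathbb E_{P_{X_n}}\Big[\mu\big(\{\delta\in[0,1): c_n^{z|x}(\delta,X_n)-c_n^{w}(\delta,X_n)<\gamma\}\big)\Big]=0 .$$ Then $\mathbf Z$ is an approximating source for $\mathbf W$ given $\mathbf X$.
   Context: Logarithms are natural. For each $n$, $X_n$ and $Z_n$ are jointly distributed random variables on countable sets $\mathcal X_n$, $\mathcal Z_n$, with joint law determined by the pmf $P_{X_n}$ and a conditional pmf $P_{Z_n|X_n}$. The channel $W_{Y_n|X_n}(\cdot|x)$ is a pmf on a countable set $\mathcal Y_n$ for each $x\in\mathcal X_n$. For a random variable $Z$ on a countable set $\mathcal Z$ with pmf $P_Z$, list the elements of positive probability as $z_1,z_2,\dots$ (a finite or countably infinite list) with $P_Z(z_1)\ge P_Z(z_2)\ge\cdots$ (ties broken arbitrarily). Set $\delta_0=0$ and $\delta_k=\sum_{i\le k}P_Z(z_i)$. For $\delta\in[0,1)$ define $c^z(\delta)=\log\frac{1}{P_Z(z_k)}$, where $k$ is the unique index with $\delta\in[\delta_{k-1},\delta_k)$. For $x\in\mathcal X_n$, $c_n^{z|x}(\cdot,x)$ is this function for the pmf $P_{Z_n|X_n}(\cdot|x)$, and $c_n^{w}(\cdot,x)$ is this function for the pmf $W_{Y_n|X_n}(\cdot|x)$.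 $\mu$ is Lebesgue measure. The variational distance is $d(P,Q)=\sum_a|P(a)-Q(a)|$. $\mathbf Z$ is an approximating source for $\mathbf W$ given $\mathbf X$ if there exist deterministic maps $\varphi_n:\mathcal X_n\times\mathcal Z_n\to\mathcal Y_n$ such that $$\lim_{n\to\infty}d\big(P_{X_nY_n},P_{X_n,\varphi_n(X_n,Z_n)}\big)=0,$$ where $P_{X_nY_n}(x,y)=P_{X_n}(x)W_{Y_n|X_n}(y|x)$. *)

From Stdlib Require Import Reals Lra Lia Classical ClassicalEpsilon.
Open Scope R_scope.

(* All countable alphabets are encoded as subsets of nat (pmfs on nat
   vanishing off the alphabet). *)

Fixpoint psum (f : nat -> R) (n : nat) : R :=
  match n with O => 0 | S m => psum f m + f m end.

Definition is_pmf (p : nat -> R) : Prop :=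
  (forall a, 0 <= p a) /\ infinite_sum p 1.

(* Sum of a nonnegative series over nat: supremum of partial sums
   (used only for nonnegative, bounded series). *)
Definition sumR (f : nat -> R) : R :=
  epsilon (inhabits 0) (fun l => is_lub (fun s => exists N, s = psum f N) l).

Definition sum2R (f : nat -> nat -> R) : R :=
  epsilon (inhabits 0)
    (fun l => is_lub (fun s => exists N, s = psum (fun a => psum (f a) N) N) l).

Definition var_dist (P Q : nat -> nat -> R) : R :=
  sum2R (fun a b => Rabs (P a b - Q a b)).

(* Lebesgue (outer) measure of a subset of R: infimum of total lengths of
   countable covers by intervals [a_i, b_i]. (Only applied to subsets of
   [0,1), which are Lebesgue measurable here, so it is Lebesgue measure.) *)
Definition cover_lengths (A : R -> Prop) (s : R) : Prop :=
  exists a b : nat -> R,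
    (forall i, a i <= b i) /\
    (forall t, A t -> exists i, a i <= t <= b i) /\
    infinite_sum (fun i => b i - a i) s.

Definition leb_measure (A : R -> Prop) : R :=
  - epsilon (inhabits 0) (fun l => is_lub (fun s => cover_lengths A (- s)) l).

(* Encoded as
   e : nat -> option nat, with None marking the end of a finite list. *)
Definition sorted_listing (p : nat -> R) (e : nat -> option nat) : Prop :=
  (forall k, e k = None -> e (S k) = None) /\
  (forall k z, e k = Some z -> 0 < p z) /\
  (forall k l z, e k = Some z -> e l = Some z -> k = l) /\
  (forall z, 0 < p z -> exists k, e k = Some z) /\
  (forall k z z', e k = Some z -> e (S k) = Some z' -> p z' <= p z).

Definition listing_mass (p : nat -> R) (e : nat -> option nat) (k : nat) : R :=
  match e k with Some z => p z | None => 0 end.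

(* c^z(delta) = log (1 / P_Z(z_k)) where delta_{k-1} <= delta < delta_k,
   delta_k = sum_{i<=k} P_Z(z_i).  (Independent of tie-breaking.)
   Here indices are 0-based: delta in [psum k, psum (k+1)). *)
Definition cfun (p : nat -> R) (delta : R) : R :=
  epsilon (inhabits 0) (fun c =>
    exists e, sorted_listing p e /\
    exists k z, e k = Some z /\
      psum (listing_mass p e) k <= delta < psum (listing_mass p e) (S k) /\
      c = ln (/ p z)).

Definition approximating_source
  (PX : nat -> nat -> R) (PZgX : nat -> nat -> nat -> R)
  (W : nat -> nat -> nat -> R) : Prop :=
  exists phi : nat -> nat -> nat -> nat,
    Un_cv (fun n =>
      var_dist (fun x y => PX n x * W n x y)
               (fun x y => PX n x *
                  sumR (fun z => if Nat.eqb (phi n x z) y then PZgX n x z else 0)))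
      0.

(* Fix [n] and [x]; write [p = P_{Z|X}(.|x)] and [w = W(.|x)]. List both pmfs in
   nonincreasing order, so that the [k]-th letter [z_k] of [p] occupies [[c_k, c_{k+1})]
   and the [j]-th letter [y_j] of [w] occupies [[a_j, a_{j+1})] in [[0, 1)]. The quantile
   map sends [z_k] to the [y_j] with [a_j <= c_k < a_{j+1}]. If [H t] is the mass of the
   letters of [p] starting before [t], the image pmf gives [y_j] the mass
   [H a_{j+1} - H a_j], hence with the overshoot [h_j = H a_j - a_j] we get
   [|w y_j - Q y_j| = |h_{j+1} - h_j|]. Whenever [w y_j <= h_j] the overshoot drops by
   exactly [w y_j], so the total variation of [h] is at most [2 sum_j min (h_j, w y_j)]
   up to a vanishing tail. The interval [[a_j, a_j + min (h_j, w y_j))] lies inside one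
   interval of each listing, where [c^{z|x} - c^w = ln (w y_j / p z_k)] and
   [min (h_j, w y_j) <= p z_k]: either the interval lies in the set [B_gamma] where the
   difference is below [gamma], or its length is at most [e^-gamma w y_j]. These
   intervals are disjoint, so [d (w, Q) <= 2 e^-gamma + 2 mu (B_gamma)]. Averaging over
   [x] and letting [gamma] grow proves the theorem. *)

From Stdlib Require Import Reals Lra Lia List Permutation Classical ClassicalEpsilon
  Rtopology.
Import ListNotations.
Open Scope R_scope.

Fixpoint lsum {A : Type} (f : A -> R) (l : list A) : R :=
  match l with [] => 0 | a :: l' => f a + lsum f l' end.

Lemma lsum_app {A} (f : A -> R) l1 l2 : lsum f (l1 ++ l2) = lsum f l1 + lsum f l2.
Proof. induction l1; simpl; [lra | rewrite IHl1; lra]. Qed.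

Lemma lsum_perm {A} (f : A -> R) l1 l2 : Permutation l1 l2 -> lsum f l1 = lsum f l2.
Proof. induction 1; simpl; lra. Qed.

Lemma lsum_nonneg {A} (f : A -> R) l : (forall a, 0 <= f a) -> 0 <= lsum f l.
Proof. intros H; induction l; simpl; [lra | specialize (H a); lra]. Qed.

Lemma lsum_le {A} (f g : A -> R) l : (forall a, In a l -> f a <= g a) -> lsum f l <= lsum g l.
Proof.
  induction l as [|a l IH]; simpl; intros H; [lra|].
  assert (f a <= g a) by auto. assert (lsum f l <= lsum g l) by auto. lra.
Qed.

Lemma lsum_ext {A} (f g : A -> R) l : (forall a, In a l -> f a = g a) -> lsum f l = lsum g l.
Proof. intros H; apply Rle_antisym; apply lsum_le; intros a Ha; rewrite H; auto; lra. Qed.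

Lemma lsum_plus {A} (f g : A -> R) l : lsum (fun a => f a + g a) l = lsum f l + lsum g l.
Proof. induction l; simpl; lra. Qed.

Lemma lsum_scal {A} c (f : A -> R) l : lsum (fun a => c * f a) l = c * lsum f l.
Proof. induction l; simpl; [ring | rewrite IHl; ring]. Qed.

Lemma lsum_map {A B} (f : B -> R) (g : A -> B) l : lsum f (map g l) = lsum (fun a => f (g a)) l.
Proof. induction l; simpl; congruence. Qed.

Lemma lsum_exchange {A B} (g : A -> B -> R) (T : list A) (L : list B) :
  lsum (fun q => lsum (g q) L) T = lsum (fun r => lsum (fun q => g q r) T) L.
Proof.
  induction T; simpl; [induction L; simpl; lra | rewrite IHT, <- lsum_plus; reflexivity].
Qed.

Lemma lsum_incl {A} (f : A -> R) l1 l2 : (forall a, 0 <= f a) -> NoDup l1 -> incl l1 l2 ->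
  lsum f l1 <= lsum f l2.
Proof.
  intros Hf; revert l2; induction l1 as [|a l1 IH]; intros l2 Hn Hi.
  - apply lsum_nonneg; auto.
  - inversion Hn; subst.
    destruct (in_split a l2) as [A1 [B1 ->]]; [apply Hi; left; auto|].
    rewrite (lsum_perm f (A1 ++ a :: B1) (a :: A1 ++ B1)) by (symmetry; apply Permutation_middle).
    simpl. enough (lsum f l1 <= lsum f (A1 ++ B1)) by lra.
    apply IH; auto. intros x Hx.
    assert (Hx2 : In x (A1 ++ a :: B1)) by (apply Hi; right; auto).
    apply in_app_or in Hx2; apply in_or_app; destruct Hx2 as [?|[?|?]]; subst; auto; contradiction.
Qed.

Lemma lsum_filter {A} (f : A -> R) (P : A -> bool) l : (forall y, P y = false -> f y = 0) ->
  lsum f l = lsum f (filter P l).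
Proof.
  intros H. induction l as [|a l IH]; simpl; auto.
  destruct (P a) eqn:E; simpl; rewrite IH; auto. rewrite (H a E); lra.
Qed.

Lemma list_bound (l : list nat) : exists M, forall x, In x l -> (x < M)%nat.
Proof.
  induction l as [|a l [M HM]]; [exists O; simpl; tauto|].
  exists (S (max a M)). intros x [<-|Hx]; [lia|]. specialize (HM x Hx); lia.
Qed.

Lemma psum_seq f n : psum f n = lsum f (seq 0 n).
Proof. induction n; [reflexivity|]. cbn [psum]. rewrite seq_S, lsum_app, IHn. simpl. lra. Qed.

Lemma psum_ext f g n : (forall i, f i = g i) -> psum f n = psum g n.
Proof. intros H. induction n; simpl; auto. rewrite IHn, H; auto. Qed.

Lemma psum_nonneg f n : (forall a, 0 <= f a) -> 0 <= psum f n.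
Proof. intros; rewrite psum_seq; apply lsum_nonneg; auto. Qed.

Lemma psum_mono f m n : (forall a, 0 <= f a) -> (m <= n)%nat -> psum f m <= psum f n.
Proof. intros Hf H; induction H; simpl; [lra|]. specialize (Hf m0); lra. Qed.

Lemma psum_scal c f n : psum (fun i => c * f i) n = c * psum f n.
Proof. rewrite !psum_seq, lsum_scal; auto. Qed.

Lemma psum_plus f g n : psum (fun i => f i + g i) n = psum f n + psum g n.
Proof. rewrite !psum_seq, lsum_plus; auto. Qed.

(* [psum] counts [n] terms, [sum_f_R0] counts [n + 1]. *)
Lemma psum_sum_f_R0 f n : psum f (S n) = sum_f_R0 f n.
Proof. induction n; simpl; [lra|]. simpl in IHn. rewrite <- IHn. simpl. lra. Qed.

Lemma psum_le_infinite_sum f s : (forall i, 0 <= f i) -> infinite_sum f s ->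
  forall n, psum f n <= s.
Proof.
  intros Hf Hs n. destruct (Rle_dec (psum f n) s) as [?|Hn]; auto. exfalso.
  destruct (Hs (psum f n - s)) as [N HN]; [lra|].
  specialize (HN (max N n) (Nat.le_max_l _ _)).
  assert (psum f n <= psum f (S (max N n))) by (apply psum_mono; auto; lia).
  rewrite psum_sum_f_R0 in H. unfold Rdist in HN. apply Rabs_def2 in HN. lra.
Qed.

Lemma psum_near_infinite_sum f s eps : infinite_sum f s -> eps > 0 ->
  exists N, psum f N > s - eps.
Proof.
  intros Hs He. destruct (Hs eps He) as [N HN]. exists (S N).
  specialize (HN N (le_n _)). rewrite psum_sum_f_R0. unfold Rdist in HN.
  apply Rabs_def2 in HN. lra.
Qed.

Lemma pmf_psum_le1 p n : is_pmf p -> psum p n <= 1.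
Proof. intros [Hp Hs]. exact (psum_le_infinite_sum p 1 Hp Hs n). Qed.

Lemma pmf_eventually_small p t : is_pmf p -> t > 0 ->
  exists N, forall z, (N <= z)%nat -> p z < t.
Proof.
  intros Hp Ht. destruct (psum_near_infinite_sum p 1 t (proj2 Hp) Ht) as [N HN].
  exists N. intros z Hz. pose proof (pmf_psum_le1 p (S z) Hp).
  assert (psum p N <= psum p z) by (apply psum_mono; auto; apply Hp).
  simpl in H. lra.
Qed.

Lemma lsum_nodup_le_psum p l : (forall a, 0 <= p a) -> NoDup l ->
  exists M, lsum p l <= psum p M.
Proof.
  intros Hp Hn. destruct (list_bound l) as [M HM]. exists M. rewrite psum_seq.
  apply lsum_incl; auto. intros x Hx; apply in_seq. specialize (HM x Hx); lia.
Qed.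

Lemma geometric_psum_le eta n : 0 <= eta -> psum (fun i => eta * (/2) ^ (S i)) n <= eta.
Proof.
  intros He. rewrite psum_scal.
  assert (Hg : psum (fun i => (/2) ^ (S i)) n = 1 - (/2) ^ n).
  { induction n; simpl; [lra|]. simpl in IHn. rewrite IHn. field. }
  rewrite Hg. assert (0 <= (/2) ^ n) by (apply pow_le; lra). nra.
Qed.

Lemma epsilon_lub (E : R -> Prop) (M : R) :
  (exists x, E x) -> (forall x, E x -> x <= M) ->
  is_lub E (epsilon (inhabits 0) (fun l => is_lub E l)).
Proof.
  intros Hne Hb. apply epsilon_spec.
  destruct (completeness E) as [m Hm]; [exists M; exact Hb | exact Hne | eauto].
Qed.

Lemma lub_approx E l eps : is_lub E l -> eps > 0 -> exists x, E x /\ x > l - eps.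
Proof.
  intros [Hu Hl] He. apply NNPP. intros Hn.
  enough (l <= l - eps) by lra. apply Hl. intros x Hx.
  destruct (Rle_dec x (l - eps)); auto. exfalso; apply Hn; exists x; split; auto; lra.
Qed.

Lemma lub_transfer (E1 E2 : R -> Prop) V : is_lub E1 V ->
  (forall x, E2 x -> exists y, E1 y /\ x <= y) -> (forall y, E1 y -> exists x, E2 x /\ y <= x) ->
  is_lub E2 V.
Proof.
  intros [Hu Hl] H12 H21. split.
  - intros x Hx. destruct (H12 x Hx) as [y [Hy Hxy]]. specialize (Hu y Hy). lra.
  - intros b Hb. apply Hl. intros y Hy. destruct (H21 y Hy) as [x [Hx Hyx]].
    specialize (Hb x Hx). lra.
Qed.

Lemma lub_diff (A B : nat -> R) al be :
  (forall K K', (K <= K')%nat -> A K <= A K') ->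
  (forall K K', (K <= K')%nat -> B K - A K <= B K' - A K') ->
  is_lub (fun s => exists K, s = A K) al -> is_lub (fun s => exists K, s = B K) be ->
  is_lub (fun s => exists K, s = B K - A K) (be - al).
Proof.
  intros HA HD HlA HlB. split.
  - intros x [K ->]. apply le_epsilon. intros eps He.
    destruct (lub_approx _ _ eps HlA He) as [x [[K1 ->] Hx]].
    pose proof (HD K (max K K1) (Nat.le_max_l _ _)).
    pose proof (HA K1 (max K K1) (Nat.le_max_r _ _)).
    assert (B (max K K1) <= be) by (apply HlB; eauto). lra.
  - intros u Hu. apply le_epsilon. intros eps He.
    destruct (lub_approx _ _ eps HlB He) as [x [[K2 ->] Hx]].
    assert (A K2 <= al) by (apply HlA; eauto).
    assert (B K2 - A K2 <= u) by (apply Hu; eauto). lra.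
Qed.

Lemma sumR_lub f M : (forall N, psum f N <= M) ->
  is_lub (fun s => exists N, s = psum f N) (sumR f).
Proof.
  intros HM. apply (epsilon_lub _ M); [exists (psum f 0); eauto | intros x [N ->]; auto].
Qed.

Lemma sumR_ge f M N : (forall N, psum f N <= M) -> psum f N <= sumR f.
Proof. intros HM. apply (sumR_lub f M HM); eauto. Qed.

Lemma sumR_zero f : (forall a, f a = 0) -> sumR f = 0.
Proof.
  intros H. assert (Hp : forall N, psum f N = 0) by (induction N; simpl; auto; rewrite IHN, H; lra).
  apply Rle_antisym.
  - apply (sumR_lub f 0); [intros; rewrite Hp; lra | intros x [N ->]; rewrite Hp; lra].
  - rewrite <- (Hp O). apply (sumR_ge f 0). intros; rewrite Hp; lra.
Qed.

Lemma sum2R_bound f B : (forall N, 0 <= psum (fun a => psum (f a) N) N <= B) ->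
  0 <= sum2R f <= B.
Proof.
  intros H. unfold sum2R.
  set (E := fun s => exists N, s = psum (fun a => psum (f a) N) N).
  destruct (epsilon_lub E B) as [Hu Hl];
    [exists (psum (fun a => psum (f a) 0) 0); unfold E; eauto | intros x [N ->]; apply H |].
  split.
  - apply Rle_trans with (psum (fun a => psum (f a) 0) 0); [simpl; lra | apply Hu; unfold E; eauto].
  - apply Hl. intros x [N ->]; apply H.
Qed.
(** * Sorted listings and the function [cfun] *)

Fixpoint listed (e : nat -> option nat) (k : nat) : list nat :=
  match k with
  | O => []
  | S k' => listed e k' ++ match e k' with Some z => [z] | None => [] end
  end.

Definition cum (p : nat -> R) (e : nat -> option nat) (k : nat) : R :=
  psum (listing_mass p e) k.

Lemma cum_S p e k : cum p e (S k) = cum p e k + listing_mass p e k.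
Proof. reflexivity. Qed.

Lemma cum_listed p e k : cum p e k = lsum p (listed e k).
Proof.
  unfold cum; induction k; simpl; auto. rewrite IHk, lsum_app. unfold listing_mass.
  destruct (e k); simpl; lra.
Qed.

Lemma in_listed e k z : In z (listed e k) <-> exists i, (i < k)%nat /\ e i = Some z.
Proof.
  induction k; simpl.
  - split; [tauto | intros [i [Hi _]]; lia].
  - rewrite in_app_iff, IHk. split.
    + intros [[i [Hi He]]|H]; [exists i; split; auto; lia|].
      destruct (e k) eqn:E; simpl in H; [|tauto]. destruct H as [<-|[]]. exists k; auto.
    + intros [i [Hi He]]. destruct (Nat.eq_dec i k) as [->|Hne].
      * right; rewrite He; simpl; auto.
      * left; exists i; split; auto; lia.
Qed.

Lemma listed_prefix e K K' : (K <= K')%nat -> exists r, listed e K' = listed e K ++ r.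
Proof.
  induction 1; [exists []; rewrite app_nil_r; auto|].
  destruct IHle as [r Hr]. cbn [listed]. rewrite Hr, <- app_assoc. eauto.
Qed.

Lemma psum_le_listed (e : nat -> option nat) (g : nat -> R) N : (forall z, 0 <= g z) ->
  (forall z, 0 < g z -> exists k, e k = Some z) ->
  exists K, psum g N <= lsum g (listed e K).
Proof.
  intros Hg Hcov. rewrite psum_seq.
  set (pos := fun z => if Rlt_dec 0 (g z) then true else false).
  rewrite (lsum_filter g pos) by
    (intros y Hy; unfold pos in Hy; destruct (Rlt_dec 0 (g y));
     [discriminate | specialize (Hg y); lra]).
  assert (Hlisted : forall z, In z (filter pos (seq 0 N)) -> exists k, e k = Some z).
  { intros z Hz. apply filter_In in Hz. unfold pos in Hz.
    destruct (Rlt_dec 0 (g z)); [auto | destruct Hz; discriminate]. }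
  destruct (list_bound (map (fun z => epsilon (inhabits O) (fun k => e k = Some z))
                            (filter pos (seq 0 N)))) as [K HK].
  exists K. apply lsum_incl; [auto | apply NoDup_filter, seq_NoDup|].
  intros z Hz. apply in_listed. set (k := epsilon (inhabits O) (fun k => e k = Some z)).
  exists k. split; [apply HK, in_map_iff; exists z; auto|].
  apply (epsilon_spec (inhabits O) (fun k => e k = Some z)); auto.
Qed.

Section SortedListing.
Variables (p : nat -> R) (e : nat -> option nat).
Hypothesis He : sorted_listing p e.

Lemma listed_NoDup k : NoDup (listed e k).
Proof.
  destruct He as (_ & _ & Hinj & _). induction k; simpl; [constructor|].
  destruct (e k) eqn:E; [|rewrite app_nil_r; auto].
  apply NoDup_app; auto; [repeat constructor; simpl; tauto|].
  intros x Hx [<-|[]]. apply in_listed in Hx. destruct Hx as [i [Hi Hei]].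
  specialize (Hinj _ _ _ Hei E). lia.
Qed.

Lemma listing_pos k z : e k = Some z -> 0 < p z.
Proof. intros Hk. destruct He as (_ & Hpos & _). exact (Hpos k z Hk). Qed.

Lemma listing_mass_nonneg k : 0 <= listing_mass p e k.
Proof.
  unfold listing_mass; destruct (e k) eqn:E; [apply Rlt_le; eapply listing_pos; eauto | lra].
Qed.

Lemma listing_defined_before i j z : e j = Some z -> (i <= j)%nat -> exists z', e i = Some z'.
Proof.
  destruct He as (Hn & _). intros Hj Hij. revert z Hj; induction Hij; intros z Hj; eauto.
  destruct (e m) eqn:E; [eapply IHHij; eauto|]. rewrite (Hn _ E) in Hj; discriminate.
Qed.

Lemma listing_nonincreasing i j z z' : (i <= j)%nat -> e i = Some z -> e j = Some z' ->
  p z' <= p z.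
Proof.
  intros Hij. revert z'. induction Hij; intros z' Hi Hj.
  - rewrite Hi in Hj; injection Hj as ->; lra.
  - destruct (listing_defined_before m (S m) z' Hj (le_S _ _ (le_n _))) as [w Hw].
    destruct He as (_ & _ & _ & _ & Hso). specialize (Hso _ _ _ Hw Hj).
    specialize (IHHij w Hi Hw). lra.
Qed.

Lemma cum_mono m n : (m <= n)%nat -> cum p e m <= cum p e n.
Proof. intros; apply psum_mono; auto; apply listing_mass_nonneg. Qed.

Lemma cum_nonneg k : 0 <= cum p e k.
Proof. apply psum_nonneg, listing_mass_nonneg. Qed.

Lemma listed_le_psum (g : nat -> R) K : (forall z, 0 <= g z) ->
  exists N, lsum g (listed e K) <= psum g N.
Proof. intros Hg. apply lsum_nodup_le_psum; auto. apply listed_NoDup. Qed.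

Hypothesis Hp : is_pmf p.

Lemma cum_le1 k : cum p e k <= 1.
Proof.
  rewrite cum_listed. destruct (listed_le_psum p k (proj1 Hp)) as [M HM].
  pose proof (pmf_psum_le1 p M Hp); lra.
Qed.

Lemma cum_near1 eps : eps > 0 -> exists K, cum p e K > 1 - eps.
Proof.
  intros Heps. destruct (psum_near_infinite_sum p 1 eps (proj2 Hp) Heps) as [N HN].
  destruct (psum_le_listed e p N (proj1 Hp)) as [K HK]; [destruct He as (_&_&_&Hc&_); auto|].
  exists K. rewrite cum_listed. lra.
Qed.

End SortedListing.

(* In two sorted listings of the same pmf, the letters whose intervals contain a given
   [d] have the same probability: ties may be broken differently, but not the
   blocks of equal probabilities. *)
Lemma listings_agree p e e' d k k' z z' : is_pmf p ->
  sorted_listing p e -> sorted_listing p e' -> e k = Some z -> e' k' = Some z' ->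
  cum p e k <= d -> d < cum p e' (S k') -> p z' <= p z.
Proof.
  intros Hp Hs Hs' Hk Hk' H1 H2. apply Rnot_lt_le; intros Hlt.
  enough (cum p e' (S k') <= cum p e k) by lra.
  rewrite !cum_listed. apply lsum_incl; [apply Hp | eapply listed_NoDup; eauto|].
  intros y Hy. apply in_listed in Hy. destruct Hy as [i [Hi Hei]].
  assert (Hyz : p z' <= p y) by (eapply (listing_nonincreasing p e' Hs' i k'); eauto; lia).
  assert (Hypos : 0 < p y) by (eapply listing_pos; eauto).
  pose proof Hs as (_ & _ & _ & Hcov & _).
  destruct (Hcov y Hypos) as [m Hm]. apply in_listed. exists m; split; auto.
  destruct (Nat.lt_ge_cases m k) as [?|Hmk]; auto. exfalso.
  assert (p y <= p z) by (eapply (listing_nonincreasing p e Hs k m); eauto). lra.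
Qed.

Lemma cfun_eq p e d k z : is_pmf p -> sorted_listing p e -> e k = Some z ->
  cum p e k <= d < cum p e (S k) -> cfun p d = ln (/ p z).
Proof.
  intros Hp Hs Hk Hd. unfold cfun.
  match goal with |- epsilon ?i ?P = _ => assert (HP : P (epsilon i P)) end.
  { apply epsilon_spec. exists (ln (/ p z)), e; split; auto. exists k, z; auto. }
  destruct HP as [e' [Hs' [k' [z' [Hk' [Hd' ->]]]]]].
  f_equal. f_equal. apply Rle_antisym.
  - exact (listings_agree p e e' d k k' z z' Hp Hs Hs' Hk Hk' (proj1 Hd) (proj2 Hd')).
  - exact (listings_agree p e' e d k' k z' z Hp Hs' Hs Hk' Hk (proj1 Hd') (proj2 Hd)).
Qed.
(** * Every pmf has a sorted listing *)

Lemma argmax_list (f : nat -> R) a l :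
  exists m, In m (a :: l) /\ forall x, In x (a :: l) -> f x <= f m.
Proof.
  revert a; induction l as [|b l IH]; intros a.
  - exists a; split; [left; auto|]. intros x [<-|[]]; lra.
  - destruct (IH b) as [m [Hm Hmax]]. destruct (Rle_dec (f a) (f m)).
    + exists m; split; [right; auto|]. intros x [<-|Hx]; auto.
    + exists a; split; [left; auto|]. intros x [<-|Hx]; [lra|]. specialize (Hmax x Hx); lra.
Qed.

(* Outside any finite list, a pmf with a positive value left attains its maximum: only
   finitely many letters exceed that positive value. *)
Lemma max_outside (p : nat -> R) (l : list nat) z0 : is_pmf p -> ~ In z0 l -> 0 < p z0 ->
  exists z, ~ In z l /\ 0 < p z /\ forall z', ~ In z' l -> p z' <= p z.
Proof.
  intros Hp Hz0 Hpos. destruct (pmf_eventually_small p (p z0) Hp Hpos) as [N HN].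
  set (C := filter (fun z => if in_dec Nat.eq_dec z l then false else true) (seq 0 N)).
  assert (HC : forall z, In z C <-> (z < N)%nat /\ ~ In z l).
  { intros z; unfold C; rewrite filter_In, in_seq.
    destruct (in_dec Nat.eq_dec z l) as [Hin|Hin]; split.
    - intros [_ F]; discriminate.
    - intros [_ F]; contradiction.
    - intros [Hz _]; split; [lia | exact Hin].
    - intros [Hz _]; split; [lia | reflexivity]. }
  assert (Hz0C : In z0 C).
  { apply HC; split; auto. destruct (Nat.lt_ge_cases z0 N) as [Hq|Hq]; auto.
    specialize (HN z0 Hq); lra. }
  destruct C as [|a C'] eqn:EC; [destruct Hz0C|].
  destruct (argmax_list p a C') as [m [Hm Hmax]].
  exists m. apply HC in Hm. destruct Hm as [Hm1 Hm2].
  assert (p z0 <= p m) by (apply Hmax; auto).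
  split; auto; split; [lra|]. intros z' Hz'.
  destruct (Nat.lt_ge_cases z' N) as [H9|H9]; [apply Hmax, HC; auto | specialize (HN z' H9); lra].
Qed.

Section GreedyListing.
Variable p : nat -> R.
Hypothesis Hp : is_pmf p.

Definition greedy_spec (l : list nat) (o : option nat) : Prop :=
  match o with
  | Some z => ~ In z l /\ 0 < p z /\ forall z', ~ In z' l -> p z' <= p z
  | None => forall z, ~ In z l -> p z <= 0
  end.

Definition greedy_next (l : list nat) : option nat := epsilon (inhabits None) (greedy_spec l).

Lemma greedy_next_spec l : greedy_spec l (greedy_next l).
Proof.
  unfold greedy_next; apply epsilon_spec.
  destruct (classic (exists z, ~ In z l /\ 0 < p z)) as [[z0 [H1 H2]]|Hn].
  - destruct (max_outside p l z0 Hp H1 H2) as [z Hz]. exists (Some z); exact Hz.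
  - exists None. intros z Hz. apply Rnot_lt_le. intros Hpz. apply Hn; eauto.
Qed.

Fixpoint greedy_prefix (k : nat) : list nat :=
  match k with
  | O => []
  | S k' => greedy_prefix k' ++
             match greedy_next (greedy_prefix k') with Some z => [z] | None => [] end
  end.

Definition greedy_listing (k : nat) : option nat := greedy_next (greedy_prefix k).

Lemma greedy_prefix_mono a b : (a <= b)%nat -> incl (greedy_prefix a) (greedy_prefix b).
Proof. induction 1; [apply incl_refl|]. simpl. intros x Hx; apply in_or_app; left; auto. Qed.

Lemma greedy_in_prefix k z : greedy_listing k = Some z -> In z (greedy_prefix (S k)).
Proof. unfold greedy_listing; intros H; simpl; rewrite H; apply in_or_app; right; left; auto. Qed.

Lemma greedy_not_in_prefix k z : greedy_listing k = Some z -> ~ In z (greedy_prefix k).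
Proof.
  unfold greedy_listing; intros H. pose proof (greedy_next_spec (greedy_prefix k)) as S.
  rewrite H in S. simpl in S. tauto.
Qed.

Lemma in_greedy_prefix k z : In z (greedy_prefix k) -> exists i, greedy_listing i = Some z.
Proof.
  induction k; simpl; [tauto|]. intros H; apply in_app_or in H. destruct H as [H|H]; auto.
  unfold greedy_listing. destruct (greedy_next (greedy_prefix k)) eqn:E; simpl in H; [|tauto].
  destruct H as [<-|[]]. eauto.
Qed.

(* Every letter of positive probability [p z] is eventually listed: otherwise each step
   would add mass at least [p z], exceeding 1 after finitely many steps. *)
Lemma greedy_listing_complete z : 0 < p z -> exists k, greedy_listing k = Some z.
Proof.
  intros Hz. apply NNPP; intros Hn.
  assert (Hnot : forall k, ~ In z (greedy_prefix k))
    by (intros k Hk; apply in_greedy_prefix in Hk; contradiction).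
  assert (Hstep : forall k, exists w, greedy_listing k = Some w /\ p z <= p w).
  { intros k. pose proof (greedy_next_spec (greedy_prefix k)) as S. unfold greedy_listing.
    destruct (greedy_next (greedy_prefix k)) as [w|].
    - exists w; split; auto. apply S, Hnot.
    - specialize (S z (Hnot k)). lra. }
  assert (Hlen : forall k, INR k * p z <= lsum p (greedy_prefix k) /\ NoDup (greedy_prefix k)).
  { induction k; [simpl; split; [lra | constructor]|]. cbn [greedy_prefix].
    destruct (Hstep k) as [w [Hw Hpw]]. pose proof (greedy_not_in_prefix k w Hw) as Hw'.
    unfold greedy_listing in Hw. rewrite Hw, lsum_app. cbn [lsum].
    destruct IHk as [IH1 IH2]. rewrite S_INR. split; [lra|].
    apply NoDup_app; [exact IH2 | repeat constructor; simpl; tauto|].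
    intros x Hx [->|[]]. contradiction. }
  destruct (INR_archimed (p z) 1 Hz) as [k Hk]. destruct (Hlen k) as [H1 H2].
  destruct (lsum_nodup_le_psum p (greedy_prefix k)) as [M HM]; [apply Hp | auto|].
  pose proof (pmf_psum_le1 p M Hp). lra.
Qed.

Lemma greedy_listing_sorted : sorted_listing p greedy_listing.
Proof.
  split; [|split; [|split; [|split]]].
  - intros k Hk. unfold greedy_listing in *. simpl. rewrite Hk, app_nil_r. exact Hk.
  - intros k z Hk. pose proof (greedy_next_spec (greedy_prefix k)) as S.
    unfold greedy_listing in Hk; rewrite Hk in S; simpl in S; tauto.
  - intros k l z Hk Hl. destruct (Nat.lt_total k l) as [H|[H|H]]; auto; exfalso.
    + apply (greedy_not_in_prefix l z Hl), (greedy_prefix_mono (S k) l); [lia|].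
      apply greedy_in_prefix; auto.
    + apply (greedy_not_in_prefix k z Hk), (greedy_prefix_mono (S l) k); [lia|].
      apply greedy_in_prefix; auto.
  - exact greedy_listing_complete.
  - intros k z z' Hk Hk'. pose proof (greedy_next_spec (greedy_prefix k)) as Sp.
    unfold greedy_listing in Hk; rewrite Hk in Sp. apply Sp. intros Hin.
    apply (greedy_not_in_prefix (S k) z' Hk'). simpl; rewrite Hk. apply in_or_app; left; auto.
Qed.

End GreedyListing.

Definition a_listing (p : nat -> R) : nat -> option nat :=
  epsilon (inhabits (fun _ : nat => @None nat)) (sorted_listing p).

Lemma a_listing_sorted p : is_pmf p -> sorted_listing p (a_listing p).
Proof.
  intros H. unfold a_listing. apply epsilon_spec.
  exists (greedy_listing p). apply greedy_listing_sorted; auto.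
Qed.
(** * Lebesgue outer measure of a union of disjoint intervals *)

Lemma heine_borel (al bl : nat -> R) u v :
  (forall t, u <= t <= v -> exists i, al i < t < bl i) ->
  exists N, forall t, u <= t <= v -> exists i, (i < N)%nat /\ al i < t < bl i.
Proof.
  intros Hcov.
  set (fam := fun x y => exists i : nat, x = INR i /\ al i < y < bl i).
  assert (Hdom : forall x, (exists y, fam x y) -> (fun x => exists i : nat, x = INR i) x)
    by (intros x [y [i [Hi _]]]; eauto).
  set (F := mkfamily (fun x => exists i : nat, x = INR i) fam Hdom).
  assert (Hopen : covering_open_set (fun c => u <= c <= v) F).
  { split.
    - intros y Hy. destruct (Hcov y Hy) as [i Hi]. exists (INR i). simpl. exists i; auto.
    - intros x y [i [Hx Hy]].
      assert (Hd : 0 < Rmin (y - al i) (bl i - y)) by (apply Rmin_pos; lra).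
      exists (mkposreal _ Hd). intros z Hz. unfold disc in Hz; simpl in Hz.
      exists i; split; auto. apply Rabs_def2 in Hz.
      pose proof (Rmin_l (y - al i) (bl i - y)). pose proof (Rmin_r (y - al i) (bl i - y)). lra. }
  destruct (compact_P3 u v F Hopen) as [D [Hc [l Hl]]].
  (* The finite subfamily is labelled by the reals [INR i] in [l]; [up (INR i) = i + 1]
     recovers the indices, which are therefore bounded. *)
  destruct (list_bound (map (fun x => Z.to_nat (up x)) l)) as [N HN].
  exists N. intros t Ht. destruct (Hc t Ht) as [y [[i [Hy Hi]] HD]].
  exists i; split; auto.
  assert (Hup : Z.to_nat (up y) = S i).
  { subst y. replace (up (INR i)) with (Z.of_nat i + 1)%Z; [lia|].
    apply tech_up; rewrite plus_IZR, <- INR_IZR_INZ; simpl; lra. }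
  assert (Hin : In (S i) (map (fun x => Z.to_nat (up x)) l)).
  { rewrite <- Hup. apply (in_map (fun x => Z.to_nat (up x))), Hl. split; auto. simpl. eauto. }
  specialize (HN _ Hin). lia.
Qed.

Definition clip (u v : R) (q : R * R) : R := Rmax 0 (Rmin (snd q) v - Rmax (fst q) u).

Lemma clip_nonneg u v q : 0 <= clip u v q.
Proof. apply Rmax_l. Qed.

Lemma clip_mono u u' v v' q : u' <= u -> v <= v' -> clip u v q <= clip u' v' q.
Proof.
  intros Hu Hv. unfold clip. apply Rle_max_compat_l.
  assert (Rmax (fst q) u' <= Rmax (fst q) u) by (apply Rle_max_compat_l; auto).
  assert (Rmin (snd q) v <= Rmin (snd q) v').
  { unfold Rmin; destruct (Rle_dec (snd q) v), (Rle_dec (snd q) v'); lra. }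
  lra.
Qed.

(* By induction on their number: remove the interval containing [u] and
   cover the rest, slightly to the right of it. *)
Lemma finite_cover_length (L : list (R * R)) u v :
  (forall t, u <= t <= v -> exists q, In q L /\ fst q <= t <= snd q) ->
  v - u <= lsum (clip u v) L.
Proof.
  remember (length L) as n eqn:Hn. assert (HlenL : (length L <= n)%nat) by lia. clear Hn.
  revert L u v HlenL. induction n as [|n IH]; intros L u v HlenL Hcov;
  (destruct (Rle_dec u v) as [Huv|Huv];
     [|pose proof (lsum_nonneg (clip u v) L (clip_nonneg u v)); lra]);
  destruct (Hcov u (conj (Rle_refl u) Huv)) as [q [Hq Hqu]];
  destruct (in_split _ _ Hq) as [A [B ->]];
  [rewrite length_app in HlenL; simpl in HlenL; lia|].
  rewrite lsum_app; simpl.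
  pose proof (lsum_nonneg (clip u v) A (clip_nonneg u v)).
  pose proof (lsum_nonneg (clip u v) B (clip_nonneg u v)).
  destruct (Rle_dec v (snd q)) as [Hv|Hv].
  - assert (clip u v q = v - u); [|lra].
    unfold clip. rewrite Rmin_right, (Rmax_right (fst q) u), Rmax_right; lra.
  - assert (Hcq : clip u v q = snd q - u).
    { unfold clip. rewrite Rmin_left, (Rmax_right (fst q) u), Rmax_right; lra. }
    assert (Hrest : forall eta, eta > 0 -> v - (snd q + eta) <= lsum (clip u v) (A ++ B)).
    { intros eta He. apply Rle_trans with (lsum (clip (snd q + eta) v) (A ++ B)).
      - apply IH; [rewrite length_app in *; simpl in HlenL; lia|]. intros t Ht.
        destruct (Hcov t ltac:(lra)) as [q' [Hq' Ht']]. exists q'; split; auto.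
        apply in_app_or in Hq'; apply in_or_app.
        destruct Hq' as [?|[<-|?]]; auto. exfalso; lra.
      - apply lsum_le. intros; apply clip_mono; lra. }
    rewrite lsum_app in Hrest.
    assert (v - snd q <= lsum (clip u v) A + lsum (clip u v) B); [|lra].
    apply le_epsilon. intros eta He. specialize (Hrest eta He). lra.
Qed.

Fixpoint chain (w : R) (T : list (R * R)) : Prop :=
  match T with [] => True | q :: T' => w <= fst q /\ fst q < snd q /\ chain (snd q) T' end.

Lemma chain_weaken w w' T : w' <= w -> chain w T -> chain w' T.
Proof. destruct T as [|q T]; simpl; auto. intros H [H1 H2]; split; [lra | auto]. Qed.

Lemma chain_nonempty T : forall w q, chain w T -> In q T -> fst q < snd q.
Proof.
  induction T as [|q' T IH]; intros w q HT Hq; [destruct Hq|].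
  destruct HT as (_ & H2 & H3). destruct Hq as [<-|Hq]; eauto.
Qed.

(* Case analysis on the comparisons in an expression built from [Rmax]/[Rmin], innermost
   comparisons first so that every case is a linear arithmetic problem. *)
Ltac destruct_innermost_Rle_dec :=
  repeat match goal with |- context [Rle_dec ?a ?b] =>
    lazymatch a with context [Rle_dec _ _] => fail | _ =>
    lazymatch b with context [Rle_dec _ _] => fail | _ => destruct (Rle_dec a b) end end end.

Lemma chain_clip_le T : forall w r, chain w T ->
  lsum (fun q => clip (fst q) (snd q) r) T <= Rmax 0 (snd r - Rmax (fst r) w).
Proof.
  induction T as [|[u v] T IH]; intros w [al bl] HT; simpl in *; [apply Rmax_l|].
  destruct HT as (H1 & H2 & H3). specialize (IH v (al, bl) H3). simpl in IH.
  pose proof (lsum_nonneg (fun q => clip (fst q) (snd q) (al, bl)) T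
                (fun q => clip_nonneg _ _ _)) as Hn.
  set (X := lsum _ T) in *. clearbody X. revert IH.
  unfold clip, Rmax, Rmin; simpl.
  destruct_innermost_Rle_dec; intros; lra.
Qed.

Lemma finite_uniform_bound {A} (T : list A) (P : A -> nat -> Prop) :
  (forall q N N', (N <= N')%nat -> P q N -> P q N') -> (forall q, In q T -> exists N, P q N) ->
  exists N, forall q, In q T -> P q N.
Proof.
  intros Hm. induction T as [|q T IH]; intros H; [exists O; simpl; tauto|].
  destruct IH as [N HN]; [intros; apply H; right; auto|].
  destruct (H q (or_introl eq_refl)) as [N' HN'].
  exists (max N N'). intros q' [<-|Hq]; [apply (Hm _ N') | apply (Hm _ N)]; auto; lia.
Qed.

Section ChainCover.
Variables (B : R -> Prop) (T : list (R * R)) (w : R) (a b : nat -> R) (s : R).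
Hypothesis HT : chain w T.
Hypothesis HTB : forall q, In q T -> forall t, fst q <= t < snd q -> B t.
Hypothesis Hab : forall i, a i <= b i.
Hypothesis Hcov : forall t, B t -> exists i, a i <= t <= b i.
Hypothesis Hs : infinite_sum (fun i => b i - a i) s.

Let X := lsum (fun q => snd q - fst q) T.

Lemma enlarged_cover_length eta N : 0 < eta ->
  psum (fun i => (b i + eta * (/2) ^ (S i)) - (a i - eta * (/2) ^ (S i))) N <= s + 2 * eta.
Proof.
  intros Heta.
  rewrite (psum_ext _ (fun i => (b i - a i) + 2 * (eta * (/2) ^ (S i)))) by (intros i; ring).
  rewrite psum_plus, psum_scal.
  pose proof (geometric_psum_le eta N (Rlt_le _ _ Heta)).
  pose proof (psum_le_infinite_sum (fun i => b i - a i) s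
                (fun i => ltac:(specialize (Hab i); lra)) Hs N).
  lra.
Qed.

(* Shrink each interval of the chain by the fraction [eps] on the right and enlarge the
   covering intervals to open ones: by compactness, the shrunk intervals are covered by
   finitely many enlarged ones, and disjointness of the chain prevents counting a
   covering interval twice. *)
Lemma chain_cover_slack eps eta : 0 < eps < 1 -> 0 < eta -> (1 - eps) * X <= s + 2 * eta.
Proof.
  intros Heps Heta.
  set (d := fun i => eta * (/2) ^ (S i)).
  assert (Hd : forall i, 0 < d i)
    by (intros; unfold d; apply Rmult_lt_0_compat; auto; apply pow_lt; lra).
  set (al := fun i => a i - d i). set (bl := fun i => b i + d i).
  set (vp := fun q : R * R => snd q - eps * (snd q - fst q)).
  destruct (finite_uniform_bound T
     (fun q N => forall t, fst q <= t <= vp q -> exists i, (i < N)%nat /\ al i < t < bl i))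
    as [N HN].
  { intros q N N' HNN' HP t Ht. destruct (HP t Ht) as [i [Hi Hi']]. exists i; split; auto; lia. }
  { intros q Hq. apply heine_borel. intros t Ht.
    assert (Hlt : fst q < snd q) by (eapply chain_nonempty; eauto).
    assert (Bt : B t) by (apply (HTB q Hq); unfold vp in Ht; nra).
    destruct (Hcov t Bt) as [i Hi]. exists i. unfold al, bl. specialize (Hd i). lra. }
  set (L := map (fun i => (al i, bl i)) (seq 0 N)).
  assert (Hshrunk : (1 - eps) * X <= lsum (fun q => lsum (clip (fst q) (snd q)) L) T).
  { unfold X. rewrite <- lsum_scal. apply lsum_le. intros q Hq.
    assert (fst q < snd q) by (eapply chain_nonempty; eauto).
    apply Rle_trans with (lsum (clip (fst q) (vp q)) L).
    - replace ((1 - eps) * (snd q - fst q)) with (vp q - fst q) by (unfold vp; ring).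
      apply finite_cover_length. intros t Ht. destruct (HN q Hq t Ht) as [i [Hi Hi']].
      exists (al i, bl i). split; [|simpl; lra].
      apply in_map_iff; exists i; split; [reflexivity | apply in_seq; lia].
    - apply lsum_le. intros r _. apply clip_mono; unfold vp; nra. }
  assert (Hdisjoint : lsum (fun r => lsum (fun q => clip (fst q) (snd q) r) T) L
                      <= lsum (fun r => snd r - fst r) L).
  { apply lsum_le. intros r Hr.
    apply Rle_trans with (Rmax 0 (snd r - Rmax (fst r) w)); [apply chain_clip_le; auto|].
    unfold L in Hr. apply in_map_iff in Hr. destruct Hr as [i [<- _]]. simpl.
    unfold al, bl. specialize (Hab i). specialize (Hd i).
    unfold Rmax; destruct (Rle_dec (a i - d i) w), (Rle_dec 0 _); lra. }
  assert (Henlarged : lsum (fun r => snd r - fst r) L <= s + 2 * eta)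
    by (unfold L; rewrite lsum_map, <- psum_seq; apply enlarged_cover_length; auto).
  rewrite lsum_exchange in Hshrunk. lra.
Qed.

Lemma chain_length_le_cover : X <= s.
Proof.
  assert (HX0 : 0 <= X).
  { unfold X. clear -HT. revert w HT. induction T as [|q T' IH]; intros w HT; simpl; [lra|].
    destruct HT as (_ & H1 & H2). specialize (IH _ H2). lra. }
  apply le_epsilon. intros dl Hdl.
  set (eps := Rmin (1/2) (dl / (2 * (X + 1)))).
  assert (He1 : 0 < eps) by (apply Rmin_pos; [lra | apply Rdiv_lt_0_compat; lra]).
  assert (He2 : eps <= 1/2) by apply Rmin_l.
  assert (He3 : eps <= dl / (2 * (X + 1))) by apply Rmin_r.
  pose proof (chain_cover_slack eps (dl / 4) ltac:(lra) ltac:(lra)).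
  assert (eps * X <= dl / 2).
  { apply Rle_trans with (dl / (2 * (X + 1)) * X); [apply Rmult_le_compat_r; auto|].
    apply Rmult_le_reg_r with (2 * (X + 1)); [lra|].
    replace (dl / (2 * (X + 1)) * X * (2 * (X + 1))) with (dl * X) by (field; lra). nra. }
  lra.
Qed.

End ChainCover.

Lemma unit_cover (B : R -> Prop) : (forall t, B t -> 0 <= t < 1) -> cover_lengths B 1.
Proof.
  intros HB. exists (fun _ => 0), (fun i => match i with O => 1 | _ => 0 end).
  split; [intros [|i]; lra|]. split.
  - intros t Ht. exists O. specialize (HB t Ht). lra.
  - intros eps He. exists O. intros n _. unfold Rdist.
    replace (sum_f_R0 _ n) with 1; [rewrite Rminus_diag, Rabs_R0; lra|].
    induction n; simpl; [lra|]. simpl in IHn. rewrite <- IHn. lra.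
Qed.

Lemma leb_measure_bounds (B : R -> Prop) T w : (forall t, B t -> 0 <= t < 1) -> chain w T ->
  (forall q, In q T -> forall t, fst q <= t < snd q -> B t) ->
  lsum (fun q => snd q - fst q) T <= leb_measure B <= 1.
Proof.
  intros HB HT HTB. unfold leb_measure.
  set (E := fun s => cover_lengths B (- s)).
  assert (HE1 : E (-1)) by (unfold E; replace (- -1) with 1 by lra; apply unit_cover; auto).
  assert (Hub : forall x, E x -> x <= - lsum (fun q => snd q - fst q) T).
  { intros x [a [b (Hab & Hc & Hs)]].
    pose proof (chain_length_le_cover B T w a b (- x) HT HTB Hab Hc Hs). lra. }
  destruct (epsilon_lub E _ (ex_intro _ _ HE1) Hub) as [Hu Hl].
  specialize (Hl _ Hub). specialize (Hu _ HE1). lra.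
Qed.

Lemma leb_measure_unit (B : R -> Prop) : (forall t, B t -> 0 <= t < 1) -> 0 <= leb_measure B <= 1.
Proof. intros HB. apply (leb_measure_bounds B [] 0 HB); simpl; tauto. Qed.
(** * The quantile coupling of two pmfs *)

Lemma telescoping_variation (h W : nat -> R) : (forall j, 0 <= h j) -> (forall j, 0 <= W j) ->
  (forall j, W j <= h j -> h (S j) = h j - W j) ->
  forall J, psum (fun j => Rabs (h (S j) - h j)) J
            <= h O + 2 * psum (fun j => Rmin (h j) (W j)) J + h J.
Proof.
  intros H0 HW Hr J. induction J; [simpl; pose proof (H0 O); lra|].
  cbn [psum]. pose proof (H0 J). pose proof (H0 (S J)).
  destruct (Rle_dec (W J) (h J)) as [Hle|Hlt].
  - rewrite (Hr J Hle), Rmin_right by auto.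
    replace (h J - W J - h J) with (- W J) by ring.
    rewrite Rabs_Ropp, Rabs_right by (apply Rle_ge; auto). rewrite (Hr J Hle) in *.
    pose proof (HW J). lra.
  - rewrite Rmin_left by lra.
    assert (Rabs (h (S J) - h J) <= h (S J) + h J) by (apply Rabs_le; lra). lra.
Qed.

Lemma ln_inv_diff_ge u v g : 0 < u -> 0 < v -> ln (/ u) - ln (/ v) >= g -> u <= exp (- g) * v.
Proof.
  intros Hu Hv H. rewrite !ln_Rinv in H by auto.
  rewrite <- (exp_ln u Hu), <- (exp_ln v Hv) at 1. rewrite Rmult_comm, <- exp_plus.
  destruct (Rle_lt_or_eq_dec (ln u) (ln v + - g)) as [Hlt|Heq];
    [lra | apply Rlt_le, exp_increasing; auto | rewrite Heq; lra].
Qed.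

Lemma lsum_listed (g : nat -> R) e K :
  lsum g (listed e K) = psum (fun j => match e j with Some y => g y | None => 0 end) K.
Proof.
  induction K; simpl; auto. rewrite lsum_app, IHK. destruct (e K); simpl; lra.
Qed.

Section QuantileCoupling.
Variables (p w : nat -> R) (eZ eW : nat -> option nat).
Hypotheses (Hp : is_pmf p) (Hw : is_pmf w).
Hypotheses (HeZ : sorted_listing p eZ) (HeW : sorted_listing w eW).

(* The [k]-th letter of [p] occupies [[cz k, cz (S k))], the [j]-th letter of [w]
   occupies [[cw j, cw (S j))], of length [wmass j]. *)
Definition cz (k : nat) : R := cum p eZ k.
Definition cw (j : nat) : R := cum w eW j.
Definition wmass (j : nat) : R := listing_mass w eW j.

Lemma cw_S j : cw (S j) = cw j + wmass j.
Proof. apply cum_S. Qed.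

Lemma wmass_nonneg j : 0 <= wmass j.
Proof. apply listing_mass_nonneg; auto. Qed.

Lemma cz_bounds k : 0 <= cz k <= 1.
Proof. split; [apply cum_nonneg | apply cum_le1]; auto. Qed.

Lemma cw_bounds j : 0 <= cw j <= 1.
Proof. split; [apply cum_nonneg | apply cum_le1]; auto. Qed.

Lemma cw_interval_exists t : 0 <= t < 1 -> exists j, cw j <= t < cw (S j).
Proof.
  intros Ht. destruct (cum_near1 w eW HeW Hw (1 - t) ltac:(lra)) as [J HJ].
  assert (HJ' : t < cw J) by (unfold cw; lra). clear HJ.
  induction J; [unfold cw, cum in HJ'; simpl in HJ'; lra|].
  destruct (Rlt_dec t (cw J)) as [H|H]; [auto | exists J; split; [lra | auto]].
Qed.

Lemma cw_interval_unique t j j' : cw j <= t < cw (S j) -> cw j' <= t < cw (S j') -> j = j'.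
Proof.
  intros H1 H2. destruct (Nat.lt_total j j') as [H|[H|H]]; auto; exfalso.
  - pose proof (cum_mono w eW HeW (S j) j' H). unfold cw in *. lra.
  - pose proof (cum_mono w eW HeW (S j') j H). unfold cw in *. lra.
Qed.

Lemma cz_lt1 k z : eZ k = Some z -> cz k < 1.
Proof.
  intros Hk. pose proof (cz_bounds (S k)). unfold cz in *. rewrite cum_S in H.
  unfold listing_mass in H; rewrite Hk in H. pose proof (listing_pos p eZ HeZ k z Hk). lra.
Qed.

Definition quantile_map (z : nat) : nat :=
  epsilon (inhabits 0%nat)
    (fun y => exists k j, eZ k = Some z /\ eW j = Some y /\ cw j <= cz k < cw (S j)).

Lemma quantile_map_spec k z : eZ k = Some z ->
  exists j, eW j = Some (quantile_map z) /\ cw j <= cz k < cw (S j).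
Proof.
  intros Hk.
  assert (Hex : exists y k j, eZ k = Some z /\ eW j = Some y /\ cw j <= cz k < cw (S j)).
  { destruct (cw_interval_exists (cz k)) as [j Hj];
      [split; [apply cz_bounds | eapply cz_lt1; eauto]|].
    assert (Hm : 0 < wmass j) by (rewrite cw_S in Hj; lra).
    unfold wmass, listing_mass in Hm. destruct (eW j) as [y|] eqn:Ey; [|lra].
    exists y, k, j; auto. }
  destruct (epsilon_spec (inhabits 0%nat) _ Hex) as [k' [j [Hk' [Hj Hint]]]].
  destruct HeZ as (_ & _ & Hinj & _). rewrite (Hinj _ _ _ Hk' Hk) in Hint. eauto.
Qed.

Lemma quantile_map_eq k z j y : eZ k = Some z -> eW j = Some y ->
  (quantile_map z = y <-> cw j <= cz k < cw (S j)).
Proof.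
  intros Hk Hj. destruct (quantile_map_spec k z Hk) as [j' [Hj' Hint]]. split.
  - intros <-. destruct HeW as (_ & _ & Hinj & _). rewrite (Hinj _ _ _ Hj Hj'). auto.
  - intros Hint2. rewrite (cw_interval_unique _ _ _ Hint Hint2) in Hj'. congruence.
Qed.

Definition mass_before_upto (t : R) (K : nat) : R :=
  psum (fun k => if Rlt_dec (cz k) t then listing_mass p eZ k else 0) K.

Definition mass_before (t : R) : R :=
  epsilon (inhabits 0) (fun l => is_lub (fun s => exists K, s = mass_before_upto t K) l).

Lemma mass_before_upto_S t K : mass_before_upto t (S K) =
  mass_before_upto t K + if Rlt_dec (cz K) t then listing_mass p eZ K else 0.
Proof. reflexivity. Qed.

Lemma mass_before_upto_le_cz t K : mass_before_upto t K <= cz K.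
Proof.
  induction K; [unfold mass_before_upto, cz, cum; simpl; lra|].
  rewrite mass_before_upto_S. unfold cz in *. rewrite cum_S.
  pose proof (listing_mass_nonneg p eZ HeZ K). destruct (Rlt_dec _ t); lra.
Qed.

Lemma mass_before_upto_mono t t' K K' : t <= t' -> (K <= K')%nat ->
  mass_before_upto t K <= mass_before_upto t' K'.
Proof.
  intros Ht HK. apply Rle_trans with (mass_before_upto t' K).
  - clear HK. induction K; [unfold mass_before_upto; simpl; lra|].
    rewrite !mass_before_upto_S.
    pose proof (listing_mass_nonneg p eZ HeZ K).
    destruct (Rlt_dec (cz K) t), (Rlt_dec (cz K) t'); lra.
  - apply psum_mono; auto. intros k.
    destruct (Rlt_dec (cz k) t'); [apply listing_mass_nonneg; auto | lra].
Qed.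

Lemma mass_before_lub t : is_lub (fun s => exists K, s = mass_before_upto t K) (mass_before t).
Proof.
  apply (epsilon_lub _ 1); [exists (mass_before_upto t 0); eauto|].
  intros x [K ->]. pose proof (mass_before_upto_le_cz t K). pose proof (cz_bounds K). lra.
Qed.

Lemma mass_before_ge t K : mass_before_upto t K <= mass_before t.
Proof. apply mass_before_lub; eauto. Qed.

Lemma mass_before_le t M : (forall K, mass_before_upto t K <= M) -> mass_before t <= M.
Proof. intros HM. apply mass_before_lub. intros x [K ->]; auto. Qed.

Lemma mass_before_le1 t : mass_before t <= 1.
Proof.
  apply mass_before_le. intros K.
  pose proof (mass_before_upto_le_cz t K). pose proof (cz_bounds K). lra.
Qed.

Lemma mass_before_mono t t' : t <= t' -> mass_before t <= mass_before t'.
Proof.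
  intros H. apply mass_before_le. intros K.
  apply Rle_trans with (mass_before_upto t' K);
    [apply mass_before_upto_mono; auto | apply mass_before_ge].
Qed.

Lemma mass_before_ge_t t : t <= 1 -> t <= mass_before t.
Proof.
  intros Ht.
  assert (Hmin : forall K, Rmin (cz K) t <= mass_before_upto t K).
  { induction K; [unfold mass_before_upto, cz, cum; simpl; apply Rmin_l|].
    rewrite mass_before_upto_S. assert (Hc : cz (S K) = cz K + listing_mass p eZ K) by apply cum_S.
    pose proof (listing_mass_nonneg p eZ HeZ K).
    destruct (Rlt_dec (cz K) t).
    - rewrite Rmin_left in IHK by lra. apply Rle_trans with (cz (S K)); [apply Rmin_l | lra].
    - rewrite Rmin_right in IHK by lra. apply Rle_trans with t; [apply Rmin_r | lra]. }
  apply le_epsilon. intros eps He.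
  destruct (cum_near1 p eZ HeZ Hp eps He) as [K HK].
  pose proof (Hmin K). pose proof (mass_before_ge t K).
  unfold Rmin, cz in *. destruct (Rle_dec (cum p eZ K) t); lra.
Qed.

Lemma mass_before_0 : mass_before 0 = 0.
Proof.
  apply Rle_antisym; [|apply mass_before_ge_t; lra]. apply mass_before_le. intros K.
  induction K; [unfold mass_before_upto; simpl; lra|]. rewrite mass_before_upto_S.
  pose proof (cz_bounds K). destruct (Rlt_dec (cz K) 0); lra.
Qed.

Lemma mass_before_upto_le_next t k : t <= cz (S k) -> forall K, mass_before_upto t K <= cz (S k).
Proof.
  intros Ht K. destruct (Nat.le_gt_cases K (S k)) as [HK|HK].
  - apply Rle_trans with (cz K);
      [apply mass_before_upto_le_cz | apply cum_mono; auto].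
  - induction HK; rewrite mass_before_upto_S.
    + pose proof (mass_before_upto_le_cz t (S k)). destruct (Rlt_dec (cz (S k)) t); lra.
    + pose proof (cum_mono p eZ HeZ (S k) m ltac:(lia)). unfold cz in *.
      destruct (Rlt_dec (cum p eZ m) t); lra.
Qed.

Lemma mass_before_upto_full t k : cz k < t -> mass_before_upto t (S k) = cz (S k).
Proof.
  intros Hk. unfold mass_before_upto, cz in *.
  change (cum p eZ (S k)) with (psum (listing_mass p eZ) (S k)). rewrite !psum_seq. apply lsum_ext.
  intros i Hi. apply in_seq in Hi. destruct (Rlt_dec (cum p eZ i) t); auto.
  pose proof (cum_mono p eZ HeZ i k ltac:(lia)). lra.
Qed.

Lemma mass_before_straddle t : 0 < t -> t < mass_before t ->
  exists k z, eZ k = Some z /\ cz k < t <= cz (S k) /\ mass_before t = cz (S k).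
Proof.
  intros Ht0 Ht. pose proof (mass_before_le1 t).
  destruct (cum_near1 p eZ HeZ Hp (1 - t) ltac:(lra)) as [K HK].
  assert (Hex : exists k, cz k < t <= cz (S k)).
  { assert (HK' : t <= cz K) by (unfold cz; lra). clear -HK' Ht0. induction K.
    - unfold cz, cum in HK'; simpl in HK'. lra.
    - destruct (Rlt_dec (cz K) t) as [H|H]; [exists K; split; auto | apply IHK]; lra. }
  destruct Hex as [k [Hk1 Hk2]].
  assert (Hm : 0 < listing_mass p eZ k) by (assert (cz (S k) = cz k + listing_mass p eZ k)
                                             by apply cum_S; lra).
  unfold listing_mass in Hm. destruct (eZ k) as [z|] eqn:Ez; [|lra].
  exists k, z; repeat split; auto. apply Rle_antisym.
  - apply mass_before_le, mass_before_upto_le_next; auto.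
  - rewrite <- (mass_before_upto_full t k Hk1). apply mass_before_ge.
Qed.

(* [mass_before] is constant on [[t, mass_before t]]: no letter starts there. *)
Lemma mass_before_flat t t' : 0 <= t -> t <= t' -> t' <= mass_before t ->
  mass_before t' = mass_before t.
Proof.
  intros H0 Htt' Ht'. apply Rle_antisym; [|apply mass_before_mono; auto].
  destruct (Rle_lt_or_eq_dec 0 t H0) as [Hpos|<-].
  - destruct (Rlt_or_le t (mass_before t)) as [Hlt|Hle].
    + destruct (mass_before_straddle t Hpos Hlt) as [k [z [_ [_ Heq]]]].
      rewrite Heq in *. apply mass_before_le, mass_before_upto_le_next. lra.
    + pose proof (mass_before_le1 t). pose proof (mass_before_ge_t t ltac:(lra)).
      replace t' with t by lra. lra.
  - rewrite mass_before_0 in *. replace t' with 0 by lra. rewrite mass_before_0; lra.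
Qed.

Definition image_summand (y z : nat) : R := if Nat.eqb (quantile_map z) y then p z else 0.
Definition image_mass (y : nat) : R := sumR (image_summand y).

Lemma image_summand_nonneg y z : 0 <= image_summand y z.
Proof. unfold image_summand; destruct (Nat.eqb _ _); [apply Hp | lra]. Qed.

Lemma image_mass_upto j y K : eW j = Some y ->
  lsum (image_summand y) (listed eZ K)
  = mass_before_upto (cw (S j)) K - mass_before_upto (cw j) K.
Proof.
  intros Hj. assert (cw j <= cw (S j)) by (pose proof (wmass_nonneg j); rewrite cw_S; lra).
  induction K; [unfold mass_before_upto; simpl; lra|].
  cbn [listed]. rewrite lsum_app, IHK, !mass_before_upto_S. unfold listing_mass.
  destruct (eZ K) as [z|] eqn:Ez; simpl;
    [|destruct (Rlt_dec (cz K) (cw (S j))), (Rlt_dec (cz K) (cw j)); lra].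
  unfold image_summand. destruct (Nat.eqb (quantile_map z) y) eqn:Eb.
  - apply Nat.eqb_eq, (quantile_map_eq K z j y Ez Hj) in Eb.
    destruct (Rlt_dec (cz K) (cw (S j))), (Rlt_dec (cz K) (cw j)); lra.
  - apply Nat.eqb_neq in Eb. rewrite (quantile_map_eq K z j y Ez Hj) in Eb.
    destruct (Rlt_dec (cz K) (cw (S j))), (Rlt_dec (cz K) (cw j)); lra.
Qed.

Lemma image_mass_eq j y : eW j = Some y ->
  image_mass y = mass_before (cw (S j)) - mass_before (cw j).
Proof.
  intros Hj. set (V := mass_before (cw (S j)) - mass_before (cw j)).
  assert (Hcov : forall z, 0 < image_summand y z -> exists k, eZ k = Some z).
  { intros z Hz. unfold image_summand in Hz. destruct (Nat.eqb _ _); [|lra].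
    destruct HeZ as (_&_&_&Hc&_); auto. }
  assert (HL : is_lub (fun s => exists K, s = lsum (image_summand y) (listed eZ K)) V).
  { apply (lub_transfer (fun s => exists K, s = mass_before_upto (cw (S j)) K
                                                - mass_before_upto (cw j) K)).
    - apply lub_diff; try apply mass_before_lub.
      + intros; apply mass_before_upto_mono; auto; lra.
      + intros K K' HK. rewrite <- !(image_mass_upto j y) by auto.
        destruct (listed_prefix eZ K K' HK) as [r ->]. rewrite lsum_app.
        pose proof (lsum_nonneg (image_summand y) r (image_summand_nonneg y)). lra.
    - intros ? [K ->]. rewrite (image_mass_upto j y K Hj).
      eexists; split; [exists K; reflexivity | lra].
    - intros ? [K ->]. rewrite <- (image_mass_upto j y K Hj).
      eexists; split; [exists K; reflexivity | lra]. }
  assert (HL2 : is_lub (fun s => exists N, s = psum (image_summand y) N) V).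
  { apply (lub_transfer _ _ _ HL).
    - intros ? [N ->]. destruct (psum_le_listed eZ (image_summand y) N
                                   (image_summand_nonneg y) Hcov) as [K HK]. eauto.
    - intros ? [K ->]. destruct (listed_le_psum p eZ HeZ (image_summand y) K
                                   (image_summand_nonneg y)) as [N HN]. eauto. }
  apply (is_lub_u _ _ _ (sumR_lub (image_summand y) V ltac:(intros N; apply HL2; eauto)) HL2).
Qed.

Lemma image_mass_unlisted y : (forall j, eW j <> Some y) -> image_mass y = 0.
Proof.
  intros Hn. apply sumR_zero. intros z. unfold image_summand.
  destruct (Nat.eqb (quantile_map z) y) eqn:Eb; auto. apply Nat.eqb_eq in Eb.
  destruct (Rle_dec (p z) 0) as [H|H]; [pose proof (proj1 Hp z); lra|].
  destruct HeZ as (_&_&_&Hc&_). destruct (Hc z ltac:(lra)) as [k Hk].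
  destruct (quantile_map_spec k z Hk) as [j [Hj _]]. rewrite Eb in Hj. exfalso; eapply Hn; eauto.
Qed.

(* The overshoot at [cw j]: how far the letters of [p] starting before [cw j] extend
   beyond it. Then [w y_j - image_mass y_j = overshoot j - overshoot (S j)]. *)
Definition overshoot (j : nat) : R := mass_before (cw j) - cw j.

Lemma overshoot_bounds j : 0 <= overshoot j <= 1 - cw j.
Proof.
  unfold overshoot. pose proof (mass_before_le1 (cw j)).
  pose proof (mass_before_ge_t (cw j) (proj2 (cw_bounds j))). lra.
Qed.

Lemma overshoot_0 : overshoot O = 0.
Proof. unfold overshoot. replace (cw O) with 0 by reflexivity. rewrite mass_before_0; lra. Qed.

Lemma overshoot_step j : wmass j <= overshoot j -> overshoot (S j) = overshoot j - wmass j.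
Proof.
  intros H. unfold overshoot in *. rewrite cw_S in *.
  rewrite (mass_before_flat (cw j) (cw j + wmass j));
    [lra | apply cw_bounds | pose proof (wmass_nonneg j); lra | lra].
Qed.

(* [[cw j, cw j + gap j)] lies in the interval of the [j]-th letter of [w] and inside the
   overshoot, hence inside a single interval of [p]. *)
Definition gap (j : nat) : R := Rmin (overshoot j) (wmass j).

Lemma gap_nonneg j : 0 <= gap j.
Proof. apply Rmin_glb; [apply overshoot_bounds | apply wmass_nonneg]. Qed.

Definition bad_set (g : R) (d : R) : Prop := 0 <= d < 1 /\ cfun p d - cfun w d < g.

(* If some point of the gap interval is not bad, then [c^z - c^w = ln (w y_j / p z_k)]
   there is at least [g], so the gap, bounded by [p z_k], is at most [e^-g w y_j]. *)
Lemma gap_small j g : (exists d, cw j <= d < cw j + gap j /\ ~ bad_set g d) ->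
  gap j <= exp (- g) * wmass j.
Proof.
  intros [d [Hd HnB]].
  assert (Hgh : gap j <= overshoot j) by apply Rmin_l.
  assert (HgW : gap j <= wmass j) by apply Rmin_r.
  assert (HW : 0 < wmass j) by lra.
  pose proof (cw_S j) as HcwS. pose proof (cw_bounds (S j)).
  unfold wmass, listing_mass in HW, HgW, HcwS |- *. destruct (eW j) as [y|] eqn:Ey; [|lra].
  (* The letter [z_k] of [p] whose interval contains [cw j] reaches beyond the gap. *)
  assert (Hcw : 0 < cw j).
  { destruct (Rle_lt_or_eq_dec 0 (cw j) (proj1 (cw_bounds j))) as [?|Heq]; auto.
    unfold overshoot in Hgh. rewrite <- Heq, mass_before_0 in Hgh. lra. }
  unfold overshoot in Hgh.
  destruct (mass_before_straddle (cw j) Hcw ltac:(lra)) as [k [z [Hk [Hk12 Hk3]]]].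
  assert (Hpz : p z = cz (S k) - cz k)
    by (unfold cz; rewrite cum_S; unfold listing_mass; rewrite Hk; ring).
  assert (Hcz : cfun p d = ln (/ p z))
    by (apply (cfun_eq p eZ d k z Hp HeZ Hk); fold (cz k) (cz (S k)); lra).
  assert (Hcw' : cfun w d = ln (/ w y))
    by (apply (cfun_eq w eW d j y Hw HeW Ey); fold (cw j) (cw (S j)); lra).
  assert (Hge : cfun p d - cfun w d >= g).
  { apply Rnot_lt_ge. intros Hlt. apply HnB. split; [lra | auto]. }
  rewrite Hcz, Hcw' in Hge.
  pose proof (ln_inv_diff_ge (p z) (w y) g (listing_pos p eZ HeZ k z Hk)
                (listing_pos w eW HeW j y Ey) Hge). lra.
Qed.

Definition bad_gap (g : R) (j : nat) : Prop :=
  0 < gap j /\ forall d, cw j <= d < cw j + gap j -> bad_set g d.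

Fixpoint bad_gaps (g : R) (j n : nat) : list (R * R) :=
  match n with
  | O => []
  | S n' => (if excluded_middle_informative (bad_gap g j) then [(cw j, cw j + gap j)] else [])
            ++ bad_gaps g (S j) n'
  end.

Lemma bad_gaps_chain g n : forall j, chain (cw j) (bad_gaps g j n).
Proof.
  induction n; intros j; simpl; auto.
  assert (cw j + gap j <= cw (S j)) by (rewrite cw_S; apply Rplus_le_compat_l, Rmin_r).
  destruct (excluded_middle_informative (bad_gap g j)) as [[H1 _]|_]; simpl.
  - repeat split; try lra. apply chain_weaken with (cw (S j)); auto.
  - apply chain_weaken with (cw (S j)); auto. pose proof (gap_nonneg j). lra.
Qed.

Lemma bad_gaps_bad g n : forall j q, In q (bad_gaps g j n) ->
  forall t, fst q <= t < snd q -> bad_set g t.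
Proof.
  induction n; intros j q Hq; simpl in Hq; [destruct Hq|].
  apply in_app_or in Hq. destruct Hq as [Hq|Hq]; [|eapply IHn; eauto].
  destruct (excluded_middle_informative (bad_gap g j)) as [[_ H2]|_]; simpl in Hq; [|destruct Hq].
  destruct Hq as [<-|[]]. exact H2.
Qed.

(* Each gap is either small or a bad interval. *)
Lemma gaps_le g n : forall j, lsum gap (seq j n)
  <= exp (- g) * lsum wmass (seq j n) + lsum (fun q => snd q - fst q) (bad_gaps g j n).
Proof.
  induction n; intros j; simpl; [lra|]. rewrite lsum_app. specialize (IHn (S j)).
  pose proof (Rmult_le_pos _ _ (Rlt_le _ _ (exp_pos (- g))) (wmass_nonneg j)).
  destruct (excluded_middle_informative (bad_gap g j)) as [Hc|Hc]; simpl; [lra|].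
  enough (gap j <= exp (- g) * wmass j) by lra.
  destruct (Rle_dec (gap j) 0) as [Hz|Hz]; [lra|].
  apply gap_small. apply NNPP. intros Hn. apply Hc. split; [lra|].
  intros d Hd. apply NNPP. intros Hb. apply Hn. eauto.
Qed.

Lemma overshoot_variation g J :
  psum (fun j => Rabs (overshoot (S j) - overshoot j)) J
  <= 2 * exp (- g) + 2 * leb_measure (bad_set g) + (1 - cw J).
Proof.
  pose proof (telescoping_variation overshoot wmass (fun j => proj1 (overshoot_bounds j))
                wmass_nonneg overshoot_step J) as HT. fold gap in HT.
  rewrite overshoot_0 in HT. pose proof (overshoot_bounds J).
  pose proof (gaps_le g J O) as HB. rewrite <- !psum_seq in HB.
  assert (HW : psum wmass J <= 1) by apply cw_bounds.
  assert (HM : lsum (fun q => snd q - fst q) (bad_gaps g O J) <= leb_measure (bad_set g)).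
  { apply (leb_measure_bounds _ _ (cw O));
      [intros t [Ht _]; auto | apply bad_gaps_chain | apply bad_gaps_bad]. }
  assert (exp (- g) * psum wmass J <= exp (- g)).
  { rewrite <- (Rmult_1_r (exp (- g))) at 2. apply Rmult_le_compat_l; [|lra].
    apply Rlt_le, exp_pos. }
  lra.
Qed.

Lemma quantile_coupling_distance g N :
  psum (fun y => Rabs (w y - image_mass y)) N <= 2 * exp (- g) + 2 * leb_measure (bad_set g).
Proof.
  set (f := fun y => Rabs (w y - image_mass y)).
  assert (Hlisted : forall y, 0 < f y -> exists j, eW j = Some y).
  { intros y Hy. apply NNPP; intros Hn. unfold f in Hy.
    rewrite image_mass_unlisted in Hy by (intros j Hj; apply Hn; eauto).
    assert (w y <= 0); [|pose proof (proj1 Hw y); rewrite Rminus_0_r, Rabs_right in Hy; lra].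
    apply Rnot_lt_le. intros Hpos. destruct HeW as (_&_&_&Hc&_). apply Hn, Hc, Hpos. }
  destruct (psum_le_listed eW f N (fun y => Rabs_pos _) Hlisted) as [K HK].
  rewrite lsum_listed in HK.
  apply le_epsilon. intros eps He.
  destruct (cum_near1 w eW HeW Hw eps He) as [J HJ]. set (M := max K J).
  assert (Hterm : forall j, match eW j with Some y => f y | None => 0 end
                            <= Rabs (overshoot (S j) - overshoot j)).
  { intros j. destruct (eW j) as [y|] eqn:Ey; [|apply Rabs_pos].
    unfold f, overshoot. rewrite (image_mass_eq j y Ey), cw_S.
    unfold wmass, listing_mass. rewrite Ey, <- Rabs_Ropp. right. f_equal. ring. }
  assert (HKM : psum (fun j => match eW j with Some y => f y | None => 0 end) K
                <= psum (fun j => Rabs (overshoot (S j) - overshoot j)) M).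
  { apply Rle_trans with (psum (fun j => Rabs (overshoot (S j) - overshoot j)) K).
    - rewrite !psum_seq. apply lsum_le. intros j _. apply Hterm.
    - apply psum_mono; [intros; apply Rabs_pos | unfold M; lia]. }
  pose proof (overshoot_variation g M).
  assert (cw J <= cw M) by (apply cum_mono; auto; unfold M; lia).
  unfold cw in *. lra.
Qed.

End QuantileCoupling.

Definition quantile_coupling (P W : nat -> nat -> R) (x z : nat) : nat :=
  quantile_map (P x) (W x) (a_listing (P x)) (a_listing (W x)) z.

Lemma averaged_coupling_distance (PX : nat -> R) (P W : nat -> nat -> R) g :
  is_pmf PX -> (forall x, is_pmf (P x)) -> (forall x, is_pmf (W x)) ->
  0 <= var_dist (fun x y => PX x * W x y)
         (fun x y => PX x * sumR (fun z => if Nat.eqb (quantile_coupling P W x z) y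
                                           then P x z else 0))
  <= 2 * exp (- g)
     + 2 * sumR (fun x => PX x * leb_measure (fun d => 0 <= d < 1 /\
                                                cfun (P x) d - cfun (W x) d < g)).
Proof.
  intros HPX HP HW.
  set (Q := fun x => image_mass (P x) (W x) (a_listing (P x)) (a_listing (W x))).
  set (mu := fun x => leb_measure (fun d => 0 <= d < 1 /\ cfun (P x) d - cfun (W x) d < g)).
  assert (Hmu : forall x, 0 <= mu x <= 1)
    by (intros x; apply leb_measure_unit; intros t [Ht _]; auto).
  assert (HPX0 : forall x, 0 <= PX x) by apply HPX.
  assert (Hrow : forall x N, psum (fun y => Rabs (PX x * W x y - PX x * Q x y)) N
                             <= PX x * (2 * exp (- g) + 2 * mu x)).
  { intros x N. rewrite (psum_ext _ (fun y => PX x * Rabs (W x y - Q x y))) by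
      (intros y; rewrite <- Rmult_minus_distr_l, Rabs_mult, (Rabs_right (PX x)) by
         (apply Rle_ge; auto); ring).
    rewrite psum_scal. apply Rmult_le_compat_l; auto.
    apply quantile_coupling_distance; auto; apply a_listing_sorted; auto. }
  assert (Hmass : forall N, psum (fun x => PX x * mu x) N <= sumR (fun x => PX x * mu x)).
  { intros N. apply (sumR_ge _ 1). intros M.
    apply Rle_trans with (psum PX M); [|apply pmf_psum_le1; auto].
    rewrite !psum_seq. apply lsum_le. intros x _. specialize (Hmu x). specialize (HPX0 x). nra. }
  apply sum2R_bound. intros N. split.
  - apply psum_nonneg. intros x. apply psum_nonneg. intros; apply Rabs_pos.
  - apply Rle_trans with (psum (fun x => 2 * exp (- g) * PX x + 2 * (PX x * mu x)) N).
    + rewrite !psum_seq. apply lsum_le. intros x _. specialize (Hrow x N).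
      unfold Q, image_mass, image_summand, quantile_coupling in *. lra.
    + rewrite psum_plus, !psum_scal. pose proof (pmf_psum_le1 PX N HPX).
      pose proof (Hmass N). pose proof (exp_pos (- g)). unfold mu in *. nra.
Qed.

Theorem theorem4
  (PX : nat -> nat -> R)            (* P_{X_n}(x) *)
  (PZgX : nat -> nat -> nat -> R)   (* P_{Z_n|X_n}(z|x) *)
  (W : nat -> nat -> nat -> R)      (* W_{Y_n|X_n}(y|x) *)
  (hPX : forall n, is_pmf (PX n))
  (hPZ : forall n x, is_pmf (PZgX n x))
  (hW : forall n x, is_pmf (W n x))
  (hyp : forall gamma : R,
     Un_cv (fun n =>
       sumR (fun x => PX n x *
         leb_measure (fun d => 0 <= d < 1 /\
           cfun (PZgX n x) d - cfun (W n x) d < gamma)))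
       0) :
  approximating_source PX PZgX W.
Proof.
  exists (fun n => quantile_coupling (PZgX n) (W n)).
  intros eps He.
  set (g := - ln (eps / 8)).
  assert (Hg : exp (- g) = eps / 8) by (unfold g; rewrite Ropp_involutive, exp_ln; lra).
  destruct (hyp g (eps / 8) ltac:(lra)) as [N HN]. exists N. intros n Hn.
  specialize (HN n Hn). unfold Rdist in *. rewrite Rminus_0_r in *. apply Rabs_def2 in HN.
  pose proof (averaged_coupling_distance (PX n) (PZgX n) (W n) g (hPX n) (hPZ n) (hW n)).
  rewrite Rabs_right; lra.
Qed.
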